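(* Let $Q$ be a loop, $S\le Q$, and $g\in\mathrm{Mlt}_\lambda(Q)$. For each $x\in g(S)$ there exists $h_x\in\mathrm{Inn}_\lambda(Q)$ such that $g(S)=x\,h_x(S)$. In particular, if $1\in g(S)$, then there exists $h\in\mathrm{Inn}_\lambda(Q)$ such that $g(S)=h(S)$.
   Context: For $x\in Q$, $L_x:Q\to Q$, $y\mapsto xy$, is the left translation. $\mathrm{Mlt}_\lambda(Q)=\langle L_x : x\in Q\rangle$ is the left multiplication group, and $\mathrm{Inn}_\lambda(Q)$ is its subgroup stabilizing the identity $1$. For a set $A$, $xA=\{xa:a\in A\}$. *)

From Stdlib Require Import List.
Import ListNotations.

Record loop := Loop {
  carrier :> Type;
  lmul : carrier -> carrier -> carrier;
  ldiv : carrier -> carrier -> carrier;   (* ldiv x y = x \ y *)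
  rdiv : carrier -> carrier -> carrier;   (* rdiv y x = y / x *)
  one : carrier;
  lmul_ldiv : forall x y, lmul x (ldiv x y) = y;
  ldiv_lmul : forall x y, ldiv x (lmul x y) = y;
  rdiv_lmul : forall x y, lmul (rdiv y x) x = y;
  lmul_rdiv : forall x y, rdiv (lmul y x) x = y;
  one_lmul : forall x, lmul one x = x;
  lmul_one : forall x, lmul x one = x
}.

Arguments lmul {l}. Arguments ldiv {l}. Arguments rdiv {l}. Arguments one {l}.

Definition L {Q : loop} (x : Q) : Q -> Q := fun y => lmul x y.
Definition Linv {Q : loop} (x : Q) : Q -> Q := fun y => ldiv x y.

Fixpoint eval_word {Q : loop} (w : list (bool * Q)) : Q -> Q :=
  match w with
  | [] => fun y => y
  | (b, x) :: w' => fun y => (if b then L x else Linv x) (eval_word w' y)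
  end.

(* g is in Mlt_lambda(Q) = < L_x : x in Q > (as a group of permutations) *)
Definition in_Mlt_lambda {Q : loop} (g : Q -> Q) : Prop :=
  exists w : list (bool * Q), forall y, g y = eval_word w y.

Definition in_Inn_lambda {Q : loop} (h : Q -> Q) : Prop :=
  in_Mlt_lambda h /\ h one = one.

Definition subloop {Q : loop} (S : Q -> Prop) : Prop :=
  S one /\
  (forall x y, S x -> S y -> S (lmul x y)) /\
  (forall x y, S x -> S y -> S (ldiv x y)) /\
  (forall x y, S x -> S y -> S (rdiv x y)).

Definition image {Q : loop} (g : Q -> Q) (S : Q -> Prop) : Q -> Prop :=
  fun z => exists s, S s /\ z = g s.

Definition lcoset {Q : loop} (x : Q) (A : Q -> Prop) : Q -> Prop :=
  fun z => exists a, A a /\ z = lmul x a.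

Definition set_eq {T : Type} (A B : T -> Prop) : Prop := forall z, A z <-> B z.

(* If x = g(s0) with s0 in S, then h := L_x^{-1} g L_s0 lies in Mlt_lambda(Q)
   and fixes 1.  Since S is a subloop, s0 S = S, so g(S) = g(s0 S) = x h(S). *)
From Stdlib Require Import List.
Import ListNotations.

Section Loop.

Variable Q : loop.

Lemma ldiv_diag (x : Q) : ldiv x x = one.
Proof. rewrite <- (lmul_one _ x) at 2. apply ldiv_lmul. Qed.

Lemma eval_word_app (w1 w2 : list (bool * Q)) (y : Q) :
  eval_word (w1 ++ w2) y = eval_word w1 (eval_word w2 y).
Proof. induction w1 as [|[b x] w IH]; simpl; congruence. Qed.

Lemma in_Mlt_lambda_comp (f g : Q -> Q) :
  in_Mlt_lambda f -> in_Mlt_lambda g -> in_Mlt_lambda (fun y => f (g y)).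
Proof.
  intros [u Hu] [v Hv]. exists (u ++ v). intros y.
  now rewrite eval_word_app, Hu, Hv.
Qed.

Lemma in_Mlt_lambda_L (x : Q) : in_Mlt_lambda (L x).
Proof. now exists [(true, x)]. Qed.

Lemma in_Mlt_lambda_Linv (x : Q) : in_Mlt_lambda (Linv x).
Proof. now exists [(false, x)]. Qed.

Lemma in_Inn_lambda_conj (g : Q -> Q) (s : Q) :
  in_Mlt_lambda g -> in_Inn_lambda (fun y => Linv (g s) (g (L s y))).
Proof.
  intros Hg. split.
  - apply (in_Mlt_lambda_comp (Linv (g s))); [apply in_Mlt_lambda_Linv|].
    apply (in_Mlt_lambda_comp g); [exact Hg | apply in_Mlt_lambda_L].
  - unfold Linv, L. now rewrite lmul_one, ldiv_diag.
Qed.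

Lemma lcoset_image_Linv (x : Q) (f : Q -> Q) (A : Q -> Prop) :
  set_eq (lcoset x (image (fun y => Linv x (f y)) A)) (image f A).
Proof.
  intros z. unfold Linv. split.
  - intros [a [[s [Hs ->]] ->]]. exists s. now rewrite lmul_ldiv.
  - intros [s [Hs ->]]. exists (ldiv x (f s)).
    split; [now exists s | now rewrite lmul_ldiv].
Qed.

Lemma image_L_subloop (f : Q -> Q) (S : Q -> Prop) (s : Q) :
  subloop S -> S s -> set_eq (image (fun y => f (L s y)) S) (image f S).
Proof.
  intros [_ [Smul [Sldiv _]]] Hs z. unfold L. split.
  - intros [t [Ht ->]]. exists (lmul s t). split; [now apply Smul | reflexivity].
  - intros [t [Ht ->]]. exists (ldiv s t).
    split; [now apply Sldiv | now rewrite lmul_ldiv].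
Qed.

Lemma lcoset_one (A : Q -> Prop) : set_eq (lcoset one A) A.
Proof.
  intros z. split.
  - intros [a [Ha ->]]. now rewrite one_lmul.
  - intros Hz. exists z. now rewrite one_lmul.
Qed.

End Loop.

Theorem lemma6p4 (Q : loop) (S : Q -> Prop) (g : Q -> Q) :
  subloop S -> in_Mlt_lambda g ->
  (forall x, image g S x ->
     exists h : Q -> Q, in_Inn_lambda h /\ set_eq (image g S) (lcoset x (image h S))) /\
  (image g S one ->
     exists h : Q -> Q, in_Inn_lambda h /\ set_eq (image g S) (image h S)).
Proof.
  intros HS Hg.
  assert (coset : forall x, image g S x ->
     exists h : Q -> Q, in_Inn_lambda h /\ set_eq (image g S) (lcoset x (image h S))).
  { intros x [s [Hs ->]].
    exists (fun y => Linv (g s) (g (L s y))).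
    split; [now apply in_Inn_lambda_conj|].
    intros z. rewrite <- (image_L_subloop Q g S s HS Hs z).
    symmetry. exact (lcoset_image_Linv Q (g s) (fun y => g (L s y)) S z). }
  split; [exact coset|].
  intros H1. destruct (coset one H1) as [h [Hh Heq]].
  exists h. split; [exact Hh|].
  intros z. rewrite (Heq z). apply lcoset_one.
Qed.
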